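(* Let $q$ be a prime power, let $n\ge 1$ with $\gcd(n,q)=1$, and let $C_1$ and $C_2$ be cyclic codes of length $n$ over $\mathbb{F}_q$ with parameters $[n,k_1,d_1]_q$ and $[n,k_2,d_2]_q$, respectively, whose defining sets are taken with respect to the same primitive $n$-th root of unity. Then there exists a QUENTA code with parameters $$[[\,n,\; k_1-|Z(C_1^\perp)\cap Z(C_2)|,\; \min\{d_1,d_2\};\; n-k_2-|Z(C_1^\perp)\cap Z(C_2)|\,]]_q .$$
   Context: A linear $[n,k,d]_q$ code is a $k$-dimensional subspace of $\mathbb{F}_q^n$ with minimum Hamming distance $d$; $C^\perp$ denotes its Euclidean dual. For $\gcd(n,q)=1$, a cyclic code $C$ of length $n$ over $\mathbb{F}_q$ is identified with an ideal of $\mathbb{F}_q[x]/(x^n-1)$; fixing a primitive $n$-th root of unity $\alpha$ in an extension field of $\mathbb{F}_q$, the defining set of $C$ is $Z(C)=\{i\in\mathbb{Z}_n : c(\alpha^i)=0 \text{ for all } c(x)\in C\}$, and $\dim C=n-|Z(C)|$. A QUENTA code (entanglement-assisted quantum error-correcting code) with parameters $[[n,k,d;c]]_q$ is a $q$-ary entanglement-assisted quantum stabilizer code that encodes $k$ logical qudits into $n$ physical qudits using $c$ pairs of maximally entangled qudits pre-shared between sender and receiver, and has minimum distance $d$ (every error acting nontrivially on fewer than $d$ of the $n$ sender's qudits is detectable). *)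

From HB Require Import structures.
From mathcomp Require Import all_boot all_order all_algebra all_field.
Set Implicit Arguments. Unset Strict Implicit. Unset Printing Implicit Defensive.
Import GRing.Theory.
Local Open Scope ring_scope.

(* Linear codes of length n over F are represented (mxalgebra style) by a
   matrix whose row space is the code; membership is (v <= C)%MS and the
   dimension is \rank C. *)

Section Codes.
Variables (F : finFieldType) (n : nat).

Definition wt (v : 'rV[F]_n) : nat := #|[set i : 'I_n | v 0 i != 0]|.

Definition is_min_dist (C : 'M[F]_n) (d : nat) : Prop :=
  (exists2 v : 'rV[F]_n, (v <= C)%MS & (v != 0) && (wt v == d)) /\
  (forall v : 'rV[F]_n, (v <= C)%MS -> v != 0 -> (d <= wt v)%N).

Definition dualC (C : 'M[F]_n) : 'M[F]_n := kermx C^T.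

Definition cshift (v : 'rV[F]_n) : 'rV[F]_n := \row_(i < n) v 0 (ord_pred i).

Definition is_cyclic (C : 'M[F]_n) : Prop :=
  forall v : 'rV[F]_n, (v <= C)%MS -> (cshift v <= C)%MS.

Definition cw_eval (L : fieldExtType F) (v : 'rV[F]_n) (x : L) : L :=
  \sum_(j < n) (v 0 j)%:A * x ^+ j.

Definition defset (L : fieldExtType F) (alpha : L) (C : 'M[F]_n) : {set 'I_n} :=
  [set i : 'I_n | [forall v : 'rV[F]_n, (v <= C)%MS ==> (cw_eval v (alpha ^+ i) == 0)]].

(* symplectic matrix J = [0 I; -I 0]; (a|b) J (x|z)^T = a.z - b.x *)
Definition symJ : 'M[F]_(n + n) := block_mx 0 1%:M (- 1%:M) 0.

Definition sympl_dual (S : 'M[F]_(n + n)) : 'M[F]_(n + n) := kermx (symJ *m S^T).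

Definition swt (v : 'rV[F]_(n + n)) : nat :=
  #|[set i : 'I_n | (lsubmx v 0 i != 0) || (rsubmx v 0 i != 0)]|.

(* S (row space in F_q^{2n}) is the symplectic stabilizer data of a QUENTA code
   [[n,k,d;c]]_q : dim S = n - k + c, dim (S cap S^perp_s) = n - k - c, and every
   vector of S^perp_s outside S cap S^perp_s (a nondetectable error) has
   symplectic weight >= d. *)
Definition is_quenta (S : 'M[F]_(n + n)) (k d c : nat) : Prop :=
  [/\ (\rank S + k = n + c)%N,
      (\rank (S :&: sympl_dual S)%MS + k + c = n)%N &
      forall v : 'rV[F]_(n + n), (v <= sympl_dual S)%MS -> ~~ (v <= S)%MS ->
        (d <= swt v)%N].

End Codes.

From HB Require Import structures.
From mathcomp Require Import all_boot all_order all_algebra all_field all_fingroup.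
From mathcomp Require Import zify ring.
Set Implicit Arguments. Unset Strict Implicit. Unset Printing Implicit Defensive.
Import GRing.Theory.
Local Open Scope ring_scope.

(** Take the CSS-type stabilizer S = C1^perp x C2^perp in F^(2n). Its symplectic
   dual is C2 x C1, so an undetectable error has a nonzero component in C2 or in
   C1 and weight at least min(d1, d2), and S cap S^perp_s is
   (C1^perp cap C2) x (C2^perp cap C1). All the ranks involved are then given by
   k1, k2 and r = rank (C1 C2^T), and the only input from cyclicity is m = k1 - r.
   This follows from dim C = n - |Z(C)| applied to the cyclic code C1^perp + C2,
   whose defining set is Z(C1^perp) cap Z(C2). The dimension formula holds because
   the Vandermonde matrix (alpha^(ij)) is invertible and conjugates the cyclic
   shift into diag(alpha^i), whose entries are distinct: the image of a cyclic
   code is a subspace stable under this diagonal matrix, hence a coordinate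
   subspace, spanned by the positions outside Z(C). *)

Section MatrixFacts.
Variable K : fieldType.

Lemma sub_diag_block_mx m1 m2 n1 n2 (X : 'M[K]_(m1, n1)) (Y : 'M_(m2, n2))
    (v : 'rV_(n1 + n2)) :
  (v <= block_mx X 0 0 Y)%MS = (lsubmx v <= X)%MS && (rsubmx v <= Y)%MS.
Proof.
apply/idP/andP => [/submxP[D ->] | [/submxP[Dl vl] /submxP[Dr vr]]].
  rewrite -[D]hsubmxK mul_row_block !mulmx0 addr0 add0r.
  by rewrite row_mxKl row_mxKr !submxMl.
apply/submxP; exists (row_mx Dl Dr).
by rewrite mul_row_block !mulmx0 addr0 add0r -vl -vr hsubmxK.
Qed.

Lemma kermx_trK m n (A : 'M[K]_(m, n)) : (kermx (kermx A^T)^T :=: A)%MS.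
Proof.
have sAk : (A <= kermx (kermx A^T)^T)%MS.
  by rewrite sub_kermx -[A in A *m _]trmxK -trmx_mul mulmx_ker trmx0.
apply/eqmx_sym/eqmxP; rewrite -(mxrank_leqif_eq sAk).
by rewrite !(mxrank_ker, mxrank_tr) subKn ?rank_leq_col.
Qed.

Lemma stablemx_kermx_tr_perm m n (s : 'S_n) (A : 'M[K]_(m, n)) :
  stablemx A (perm_mx s) -> stablemx (kermx A^T) (perm_mx s).
Proof.
move=> sA; have eqA : (A *m perm_mx s == A)%MS.
  by rewrite -(mxrank_leqif_eq sA) mxrankMfree // row_free_unit unitmx_perm.
have /submxP[X AsV] : (A *m (perm_mx s)^T <= A)%MS.
  have /andP[_ /(submxMr (perm_mx s^-1))] := eqA.
  by rewrite tr_perm_mx -mulmxA -perm_mxM mulgV perm_mx1 mulmx1.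
by rewrite sub_kermx -mulmxA -[perm_mx s]trmxK -trmx_mul AsV trmx_mul mulmxA
  mulmx_ker mul0mx.
Qed.

Lemma unitmx_Vandermonde n (a : 'rV[K]_n) :
  injective (a 0) -> Vandermonde n a \in unitmx.
Proof.
move=> a_inj; rewrite unitmxE det_Vandermonde unitfE.
apply/prodf_neq0 => i _; apply/prodf_neq0 => j lt_ij.
by rewrite subr_eq0; apply: contraTneq lt_ij => /a_inj ->; rewrite ltnn.
Qed.

End MatrixFacts.

Section CoordinateSubspaces.
Variables (K : fieldType) (n : nat).
Implicit Types (T : {set 'I_n}) (d w : 'rV[K]_n).

Definition coordmx T : 'M[K]_n := (\sum_(i in T) <<delta_mx 0 i : 'rV_n>>)%MS.

Lemma mxrank_coordmx T : \rank (coordmx T) = #|T|.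
Proof.
have /mxdirectP -> := @mxdirect_delta K _ (mem T) n id (in2W (@inj_id _)).
by rewrite /= -sum1_card; apply: eq_bigr => i _; rewrite mxrank_gen mxrank_delta.
Qed.

Lemma delta_sub_coordmx T i : i \in T -> ((delta_mx 0 i : 'rV[K]_n) <= coordmx T)%MS.
Proof. by move=> iT; rewrite -genmxE; apply: (sumsmx_sup i). Qed.

Lemma sub_coordmx T w : (forall i, i \notin T -> w 0 i = 0) -> (w <= coordmx T)%MS.
Proof.
move=> w0; rewrite [w]row_sum_delta; apply: summx_sub => i _.
have [iT | /w0->] := boolP (i \in T); last by rewrite scale0r sub0mx.
by rewrite scalemx_sub ?delta_sub_coordmx.
Qed.

Lemma stablemx_diag_row_prod m d (W : 'M_(m, n)) w (s : seq 'I_n) :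
  stablemx W (diag_mx d) -> (w <= W)%MS ->
  (\row_j (w 0 j * \prod_(k <- s) (d 0 j - d 0 k))%R <= W)%MS.
Proof.
move=> Wd wW; elim: s => [|k s IH].
  by rewrite (_ : \row_j _ = w) //; apply/rowP => j; rewrite mxE big_nil mulr1.
set u := \row_j _ in IH.
rewrite (_ : \row_j _ = u *m diag_mx d + (- d 0 k) *: u).
  by rewrite addmx_sub ?scalemx_sub // (submx_trans (submxMr _ IH)).
by apply/rowP => j; rewrite mul_mx_diag !mxE big_cons; ring.
Qed.

Lemma diag_stable_delta m d (W : 'M_(m, n)) w i :
  injective (d 0) -> stablemx W (diag_mx d) -> (w <= W)%MS -> w 0 i != 0 ->
  ((delta_mx 0 i : 'rV_n) <= W)%MS.
Proof.
move=> d_inj Wd wW wi0.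
have := stablemx_diag_row_prod [seq k <- enum 'I_n | k != i] Wd wW.
pose c := w 0 i * \prod_(k | k != i) (d 0 i - d 0 k).
have c0 : c != 0.
  rewrite mulf_neq0 //; apply/prodf_neq0 => k ki.
  by rewrite subr_eq0; apply: contra_neq ki => /d_inj ->.
rewrite (_ : \row_j _ = c *: delta_mx 0 i); last first.
  apply/rowP => j; rewrite !mxE big_filter big_enum_cond /=.
  have [-> | ji] := eqVneq j i; first by rewrite mulr1.
  by rewrite mulr0 (bigD1 j) //= subrr mul0r mulr0.
by move=> /(scalemx_sub c^-1); rewrite scalerA mulVf // scale1r.
Qed.

End CoordinateSubspaces.

Section LinearCodes.
Variables (F : finFieldType) (n : nat).
Implicit Types (A B C D : 'M[F]_n) (v : 'rV[F]_n).

Lemma mxrank_dualC C : \rank (dualC C) = (n - \rank C)%N.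
Proof. by rewrite mxrank_ker mxrank_tr. Qed.

Lemma dualCK C : (dualC (dualC C) :=: C)%MS.
Proof. exact: kermx_trK. Qed.

Lemma mxrank_cap_dualC C D : \rank (dualC C :&: D)%MS = (\rank D - \rank (D *m C^T))%N.
Proof. by rewrite capmxC -(mxrank_mul_ker D C^T) addKn. Qed.

Definition cshift_perm : 'S_n := perm (@ordS_inj n).
Definition cshift_mx : 'M[F]_n := perm_mx cshift_perm.

Lemma cshift_permV i : cshift_perm^-1%g i = ord_pred i.
Proof. by apply: (@perm_inj _ cshift_perm); rewrite permKV permE ord_predK. Qed.

Lemma cshift_mxE v : cshift v = v *m cshift_mx.
Proof.
rewrite /cshift_mx -[cshift_perm]invgK -col_permE.
by apply/rowP => i; rewrite !mxE cshift_permV.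
Qed.

Lemma cyclic_stablemx C : is_cyclic C <-> stablemx C cshift_mx.
Proof.
split=> [cC | sC v vC]; last by rewrite cshift_mxE (submx_trans (submxMr _ vC)).
by apply/row_subP => r; rewrite row_mul -cshift_mxE cC ?row_sub.
Qed.

Lemma cyclic_dualC C : is_cyclic C -> is_cyclic (dualC C).
Proof. by move=> /cyclic_stablemx /stablemx_kermx_tr_perm /cyclic_stablemx. Qed.

Lemma cyclic_addsmx A B : is_cyclic A -> is_cyclic B -> is_cyclic (A + B)%MS.
Proof.
by move=> /cyclic_stablemx sA /cyclic_stablemx sB; apply/cyclic_stablemx/stableDmx.
Qed.

Lemma cw_evalD (L : fieldExtType F) v w (x : L) :
  cw_eval (v + w) x = cw_eval v x + cw_eval w x.
Proof.
by rewrite /cw_eval -big_split; apply: eq_bigr => j _; rewrite mxE scalerDl mulrDl.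
Qed.

Lemma defset_addsmx (L : fieldExtType F) (alpha : L) A B :
  defset alpha (A + B)%MS = defset alpha A :&: defset alpha B.
Proof.
apply/setP => i; rewrite !inE.
apply/forallP/andP => [Z_AB | [/forallP Z_A /forallP Z_B] v].
  by split; apply/forallP => v; apply/implyP => vAB;
    apply: (implyP (Z_AB v)); rewrite (submx_trans vAB) ?addsmxSl ?addsmxSr.
apply/implyP => /sub_addsmxP[u ->]; rewrite cw_evalD.
have Z_uA := implyP (Z_A _) (submxMl u.1 A).
have Z_uB := implyP (Z_B _) (submxMl u.2 B).
by rewrite (eqP Z_uA) (eqP Z_uB) addr0.
Qed.

End LinearCodes.

Section DefiningSets.
Variables (F : finFieldType) (n : nat) (L : fieldExtType F) (alpha : L).
Hypothesis prim : n.-primitive_root alpha.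

Local Notation toL A := (map_mx (in_alg L) A).
Local Notation pows := (\row_(i < n) alpha ^+ i).
Local Notation V := (Vandermonde n pows).

Lemma cw_eval_Vandermonde (v : 'rV[F]_n) (i : 'I_n) :
  cw_eval v (alpha ^+ i) = (toL v *m V) 0 i.
Proof. by rewrite mxE; apply: eq_bigr => j _; rewrite !mxE. Qed.

Lemma pows_inj : injective (pows 0).
Proof.
move=> i j; rewrite !mxE => /eqP; rewrite (eq_prim_root_expr prim).
by rewrite !modn_small // => /eqP /val_inj.
Qed.

Lemma cshift_Vandermonde : toL (cshift_mx F n) *m V = V *m diag_mx pows.
Proof.
rewrite map_perm_mx -row_permE; apply/matrixP => j i.
rewrite mul_mx_diag !mxE permE -!exprM -exprD -mulnSr /=.
by rewrite -(prim_expr_mod prim) modnMmr (prim_expr_mod prim).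
Qed.

Lemma cyclic_Vandermonde_stable (C : 'M[F]_n) :
  is_cyclic C -> stablemx (toL C *m V) (diag_mx pows).
Proof.
move=> /cyclic_stablemx sC.
by rewrite -mulmxA -cshift_Vandermonde mulmxA -map_mxM submxMr ?map_submx.
Qed.

Lemma cyclic_Vandermonde_eq (C : 'M[F]_n) :
  is_cyclic C -> (toL C *m V :=: coordmx L (~: defset alpha C))%MS.
Proof.
move=> cC; apply/eqmxP/andP; split.
  apply/row_subP => r; apply: sub_coordmx => i; rewrite !inE negbK => /forallP Zi.
  by rewrite row_mul -map_row -cw_eval_Vandermonde (eqP (implyP (Zi _) (row_sub r C))).
apply/sumsmx_subP => i; rewrite genmxE !inE => /forallPn[v].
rewrite negb_imply => /andP[vC vi].
apply: (diag_stable_delta (w := toL v *m V)) pows_inj (cyclic_Vandermonde_stable cC) _ _.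
  by rewrite submxMr ?map_submx.
by rewrite -cw_eval_Vandermonde.
Qed.

Lemma rank_cyclic (C : 'M[F]_n) : is_cyclic C -> \rank C = (n - #|defset alpha C|)%N.
Proof.
move=> cC; have V_free : row_free V.
  by rewrite row_free_unit; exact: unitmx_Vandermonde pows_inj.
rewrite -(mxrank_map (in_alg L)) -(mxrankMfree _ V_free) (cyclic_Vandermonde_eq cC).
by rewrite mxrank_coordmx cardsCs setCK card_ord.
Qed.

Lemma card_defset_dualC_cap (C1 C2 : 'M[F]_n) :
  is_cyclic C1 -> is_cyclic C2 ->
  (#|defset alpha (dualC C1) :&: defset alpha C2| + \rank (C1 *m C2^T))%N = \rank C1.
Proof.
move=> cC1 cC2.
have := rank_cyclic (cyclic_addsmx (cyclic_dualC cC1) cC2).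
rewrite defset_addsmx; set Z := _ :&: _.
have := max_card Z; rewrite card_ord.
have := mxrank_sum_cap (dualC C1) C2; rewrite mxrank_cap_dualC mxrank_dualC.
have := rank_leq_col C1; have := mxrankM_maxl C2 C1^T.
rewrite -mxrank_tr trmx_mul trmxK; set R := \rank (C1 *m C2^T); lia.
Qed.

End DefiningSets.

Section CssConstruction.
Variables (F : finFieldType) (n : nat).
Implicit Types (C D X Y : 'M[F]_n) (v : 'rV[F]_(n + n)).

Definition css_mx C1 C2 : 'M[F]_(n + n) := block_mx (dualC C1) 0 0 (dualC C2).

Lemma sub_sympl_dual_diag_block X Y v :
  (v <= sympl_dual (block_mx X 0 0 Y))%MS =
  (lsubmx v <= dualC Y)%MS && (rsubmx v <= dualC X)%MS.
Proof.
rewrite /sympl_dual sub_kermx -[v]hsubmxK /symJ mulmxA mul_row_block.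
rewrite tr_block_mx !trmx0 mul_row_block !mulmx0 !addr0 !add0r !mulmx1 ?mulmxN.
rewrite row_mx_eq0 mul_mx_scalar scale1r mulNmx oppr_eq0 andbC row_mxKl row_mxKr.
by rewrite -!sub_kermx.
Qed.

Lemma sub_sympl_dual_css C1 C2 v :
  (v <= sympl_dual (css_mx C1 C2))%MS = (lsubmx v <= C2)%MS && (rsubmx v <= C1)%MS.
Proof. by rewrite sub_sympl_dual_diag_block !dualCK. Qed.

Lemma css_cap_sympl_dual C1 C2 :
  (css_mx C1 C2 :&: sympl_dual (css_mx C1 C2)
     :=: block_mx (dualC C1 :&: C2) 0 0 (dualC C2 :&: C1))%MS.
Proof.
apply/eqmxP/rV_eqP => v.
by rewrite sub_capmx sub_sympl_dual_css !sub_diag_block_mx !sub_capmx andbACA.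
Qed.

Lemma leq_wt_lsubmx_swt v : (wt (lsubmx v) <= swt v)%N.
Proof. by apply/subset_leq_card/subsetP => i; rewrite !inE => ->. Qed.

Lemma leq_wt_rsubmx_swt v : (wt (rsubmx v) <= swt v)%N.
Proof. by apply/subset_leq_card/subsetP => i; rewrite !inE => ->; rewrite orbT. Qed.

Lemma css_sympl_dual_swt C1 C2 d1 d2 v :
  is_min_dist C1 d1 -> is_min_dist C2 d2 ->
  (v <= sympl_dual (css_mx C1 C2))%MS -> v != 0 -> (minn d1 d2 <= swt v)%N.
Proof.
move=> [_ min_d1] [_ min_d2]; rewrite sub_sympl_dual_css => /andP[lC2 rC1] v0.
have [l0 | l0] := eqVneq (lsubmx v) 0.
  have r0 : rsubmx v != 0.
    by apply: contraNneq v0 => r0; rewrite -[v]hsubmxK l0 r0 row_mx0.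
  by rewrite geq_min (leq_trans (min_d1 _ rC1 r0)) ?leq_wt_rsubmx_swt.
by rewrite geq_min (leq_trans (min_d2 _ lC2 l0)) ?leq_wt_lsubmx_swt ?orbT.
Qed.

End CssConstruction.

Unset Implicit Arguments.

Theorem mainTheorem1 (F : finFieldType) (n : nat) (L : fieldExtType F) (alpha : L)
    (C1 C2 : 'M[F]_n) (d1 d2 : nat) :
  (0 < n)%N -> coprime n #|F| -> n.-primitive_root alpha ->
  is_cyclic C1 -> is_cyclic C2 ->
  is_min_dist C1 d1 -> is_min_dist C2 d2 ->
  let m := #|defset alpha (dualC C1) :&: defset alpha C2| in
  exists S : 'M[F]_(n + n),
    is_quenta S (\rank C1 - m) (minn d1 d2) (n - \rank C2 - m).
Proof.
move=> _ _ prim cC1 cC2 dC1 dC2 m; exists (css_mx C1 C2).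
have m_r : (m + \rank (C1 *m C2^T))%N = \rank C1 := card_defset_dualC_cap prim cC1 cC2.
have r_sym : \rank (C2 *m C1^T) = \rank (C1 *m C2^T) by rewrite -mxrank_tr trmx_mul trmxK.
(* The subtraction defining c = n - k2 - m does not truncate. *)
have le_c : (\rank C1 - \rank (C1 *m C2^T) <= n - \rank C2)%N.
  by rewrite -mxrank_cap_dualC -mxrank_dualC mxrankS ?capmxSl.
have := rank_leq_col C1; have := rank_leq_col C2; have := mxrankM_maxl C2 C1^T.
rewrite r_sym => le_r2 le_k2 le_k1; split.
- by rewrite rank_diag_block_mx !mxrank_dualC; lia.
- by rewrite css_cap_sympl_dual rank_diag_block_mx !mxrank_cap_dualC r_sym; lia.
move=> v vS' vS; apply: css_sympl_dual_swt dC1 dC2 vS' _.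
by apply: contraNneq vS => ->; rewrite sub0mx.
Qed.
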